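(* Let $f:\mathbb{R}^{d_0}\to\mathbb{R}$ be an $L$-layer ReLU network with weights $W^{(i)}\in\mathbb{R}^{d_i\times d_{i-1}}$ and biases $b^{(i)}\in\mathbb{R}^{d_i}$ ($1\le i\le L$, $d_L=1$), defined by $\hat z^{(0)}(x)=x$, $z^{(i)}(x)=W^{(i)}\hat z^{(i-1)}(x)+b^{(i)}$, $\hat z^{(i)}(x)=\mathrm{ReLU}(z^{(i)}(x))$, $f(x)=z^{(L)}(x)$. Let $\mathcal{C}\subseteq\mathbb{R}^{d_0}$ be an input set, let $\mathcal{Z}$ be a set of neuron split constraints given by disjoint index sets $\mathcal{Z}^{+(i)},\mathcal{Z}^{-(i)}\subseteq\{1,\dots,d_i\}$ ($1\le i\le L-1$), and let $l^{(i)}\le z^{(i)}(x)\le u^{(i)}$ be pre-ReLU bounds ($1\le i\le L$) valid for all $x\in\mathcal{C}$ whose pre-activations satisfy the split constraints. Fix any free parameters $\alpha^{(i)}_j\in[0,1]$. Then $$\min_{x\in\mathcal{C},\,z\in\mathcal{Z}} f(x)\;\ge\;\max_{\beta\ge 0}\;\min_{x\in\mathcal{C}}\;(a+P\beta)^\top x+q^\top\beta+c,$$ where $\beta=[\beta^{(1)\top}\ \cdots\ \beta^{(L-1)\top}]^\top$ with $\beta^{(i)}\in\mathbb{R}^{d_i}$, and the quantities $a\in\mathbb{R}^{d_0}$, $P\in\mathbb{R}^{d_0\times\sum_{i=1}^{L-1}d_i}$, $q\in\mathbb{R}^{\sum_{i=1}^{L-1}d_i}$, $c\in\mathbb{R}$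 (which depend on $W^{(i)},b^{(i)},l^{(i)},u^{(i)}$, on $\alpha$ and, through the matrices $D^{(i)}$ and vectors $\underline{b}^{(i)}$ below, on $\beta$) are defined as follows: $$a=\big[\Omega(L,1)W^{(1)}\big]^\top,\qquad P=[P_1^\top\ \cdots\ P_{L-1}^\top],\quad P_i=S^{(i)}\Omega(i,1)W^{(1)}\in\mathbb{R}^{d_i\times d_0},$$ $$q=[q_1^\top\ \cdots\ q_{L-1}^\top]^\top,\quad q_i=\sum_{k=1}^{i}S^{(i)}\Omega(i,k)b^{(k)}+\sum_{k=2}^{i}S^{(i)}\Omega(i,k)W^{(k)}\underline{b}^{(k-1)},$$ $$c=\sum_{i=1}^{L}\Omega(L,i)b^{(i)}+\sum_{i=2}^{L}\Omega(L,i)W^{(i)}\underline{b}^{(i-1)}.$$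
   Context: Split constraints: $z\in\mathcal{Z}$ means $z^{(i)}_j\ge 0$ for all $j\in\mathcal{Z}^{+(i)}$ and $z^{(i)}_j<0$ for all $j\in\mathcal{Z}^{-(i)}$; the left-hand minimum is over $x\in\mathcal{C}$ whose pre-activation vector $z=(z^{(1)}(x),\dots,z^{(L-1)}(x))$ lies in $\mathcal{Z}$. $S^{(i)}\in\mathbb{R}^{d_i\times d_i}$ is diagonal with $S^{(i)}_{j,j}=-1$ if $j\in\mathcal{Z}^{+(i)}$, $+1$ if $j\in\mathcal{Z}^{-(i)}$, and $0$ otherwise. For $1\le i\le k\le L$, $\Omega(i,i)=I$ and $\Omega(k+1,i)=W^{(k+1)}D^{(k)}\Omega(k,i)$. The row vectors $A^{(i)}\in\mathbb{R}^{1\times d_i}$ are defined by $A^{(L-1)}=W^{(L)}$ and $A^{(i)}=(A^{(i+1)}D^{(i+1)}+\beta^{(i+1)\top}S^{(i+1)})W^{(i+1)}$ for $0\le i\le L-2$. For $1\le i\le L-1$, $D^{(i)}$ is diagonal with $D^{(i)}_{j,j}=1$ if $l^{(i)}_j\ge0$ or $j\in\mathcal{Z}^{+(i)}$; $0$ if $u^{(i)}_j\le 0$ or $j\in\mathcal{Z}^{-(i)}$; $\alpha^{(i)}_j$ if $u^{(i)}_j>0>l^{(i)}_j$, $j\notin\mathcal{Z}^{+(i)}\cup\mathcal{Z}^{-(i)}$ and $A^{(i)}_{1,j}\ge 0$; and $\frac{u^{(i)}_j}{u^{(i)}_j-l^{(i)}_j}$ if $u^{(i)}_j>0>l^{(i)}_j$,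 $j\notin\mathcal{Z}^{+(i)}\cup\mathcal{Z}^{-(i)}$ and $A^{(i)}_{1,j}<0$. The vector $\underline{b}^{(i)}$ has $\underline{b}^{(i)}_j=-\frac{u^{(i)}_jl^{(i)}_j}{u^{(i)}_j-l^{(i)}_j}$ if $u^{(i)}_j>0>l^{(i)}_j$, $j\notin\mathcal{Z}^{+(i)}\cup\mathcal{Z}^{-(i)}$ and $A^{(i)}_{1,j}<0$, and $\underline{b}^{(i)}_j=0$ otherwise. (These are computed top-down: $A^{(L-1)}$, then $D^{(L-1)},\underline{b}^{(L-1)}$, then $A^{(L-2)}$, etc.) *)

From HB Require Import structures.
From mathcomp Require Import all_boot all_order all_algebra.
From mathcomp Require Import classical_sets reals constructive_ereal ereal.
Set Implicit Arguments. Unset Strict Implicit. Unset Printing Implicit Defensive.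
Import Order.TTheory GRing.Theory Num.Theory.
Local Open Scope ring_scope.

Section ReluNet.
Variable R : realType.
Variable d : nat -> nat.
Variable L : nat.
(* W i : d_i x d_{i-1} weights, b i : d_i biases (meaningful for 1 <= i <= L) *)
Variable W : forall i, 'M[R]_(d i, d i.-1).
Variable b : forall i, 'cV[R]_(d i).
Variable l u : forall i, 'cV[R]_(d i).
Variable Zp Zn : forall i, {set 'I_(d i)}.
Variable alpha : forall i, 'cV[R]_(d i).

Definition relu (r : R) : R := Num.max r 0.

Fixpoint zhat (i : nat) (x : 'cV[R]_(d 0)) {struct i} : 'cV[R]_(d i) :=
  match i as i0 return 'cV[R]_(d i0) with
  | 0 => x
  | i'.+1 => map_mx relu (W i'.+1 *m zhat i' x + b i'.+1)
  end.

(* z^{(i)}(x), for i >= 1 (the value at i = 0 is irrelevant) *)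
Definition zpre (i : nat) (x : 'cV[R]_(d 0)) : 'cV[R]_(d i) :=
  match i as i0 return 'cV[R]_(d i0) with
  | 0 => x
  | i'.+1 => W i'.+1 *m zhat i' x + b i'.+1
  end.

Definition sc (M : 'M[R]_1) : R := M ord0 ord0.

(* the network output f(x) = z^{(L)}(x) in R^{d_L} = R^1 (d_L = 1 is assumed
   in the theorem; conform_mx is the identity cast when the sizes agree) *)
Definition fnet (x : 'cV[R]_(d 0)) : R := sc (conform_mx 0 (zpre L x)).

Definition in_splits (x : 'cV[R]_(d 0)) : Prop :=
  forall i, (1 <= i <= L.-1)%N ->
    (forall j, j \in Zp i -> 0 <= zpre i x j ord0) /\
    (forall j, j \in Zn i -> zpre i x j ord0 < 0).

Definition Smx (i : nat) : 'M[R]_(d i) :=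
  diag_mx (\row_j (if j \in Zp i then -1 else if j \in Zn i then 1 else 0)).

Definition unstable (i : nat) (j : 'I_(d i)) : bool :=
  [&& 0 < u i j ord0, l i j ord0 < 0, j \notin Zp i & j \notin Zn i].

(* D^{(i)} as a function of A^{(i)} *)
Definition Dof (i : nat) (A : 'rV[R]_(d i)) : 'M[R]_(d i) :=
  diag_mx (\row_j
    (if (0 <= l i j ord0) || (j \in Zp i) then 1
     else if (u i j ord0 <= 0) || (j \in Zn i) then 0
     else if 0 <= A ord0 j then alpha i j ord0
     else u i j ord0 / (u i j ord0 - l i j ord0))).

(* underline b^{(i)} as a function of A^{(i)} *)
Definition blof (i : nat) (A : 'rV[R]_(d i)) : 'cV[R]_(d i) :=
  \col_j (if unstable j && (A ord0 j < 0)
          then - (u i j ord0 * l i j ord0) / (u i j ord0 - l i j ord0)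
          else 0).

Section WithBeta.
(* beta^{(i)}, meaningful for 1 <= i <= L-1 *)
Variable beta : forall i, 'cV[R]_(d i).

(* A^{(i)} computed top-down: Arec n i is A^{(i)} when n = L-1-i *)
Fixpoint Arec (n i : nat) {struct n} : 'rV[R]_(d i) :=
  match n with
  | 0 => conform_mx 0 (W L)
  | n'.+1 =>
      let A' := Arec n' i.+1 in
      (A' *m Dof A' + (beta i.+1)^T *m Smx i.+1) *m W i.+1
  end.

Definition Amx (i : nat) : 'rV[R]_(d i) := Arec (L.-1 - i) i.
Definition Dmx (i : nat) : 'M[R]_(d i) := Dof (Amx i).
Definition blmx (i : nat) : 'cV[R]_(d i) := blof (Amx i).

(* Omega(k, i) : d_k x d_i, for 1 <= i <= k <= L *)
Fixpoint Omega (k i : nat) {struct k} : 'M[R]_(d k, d i) :=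
  match k as k0 return 'M[R]_(d k0, d i) with
  | 0 => conform_mx 0 (1%:M : 'M[R]_(d i))
  | k'.+1 => if i == k'.+1 then conform_mx 0 (1%:M : 'M[R]_(d i))
             else W k'.+1 *m Dmx k' *m Omega k' i
  end.

Definition avec : 'cV[R]_(d 0) :=
  (conform_mx 0 (Omega L 1 *m W 1) : 'rV[R]_(d 0))^T.

Definition Pblk (i : nat) : 'M[R]_(d i, d 0) := Smx i *m Omega i 1 *m W 1.

Definition qblk (i : nat) : 'cV[R]_(d i) :=
  \sum_(1 <= k < i.+1) Smx i *m Omega i k *m b k
  + \sum_(2 <= k < i.+1) Smx i *m Omega i k *m W k *m blmx k.-1.

Definition cconst : R :=
  sc (conform_mx 0 (\sum_(1 <= i < L.+1) Omega L i *m b i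
                    + \sum_(2 <= i < L.+1) Omega L i *m W i *m blmx i.-1)).

(* P beta = sum_i P_i^T beta^{(i)} (block product) *)
Definition Pbeta : 'cV[R]_(d 0) := \sum_(1 <= i < L) (Pblk i)^T *m beta i.

(* q^T beta = sum_i q_i^T beta^{(i)} (block product) *)
Definition qbeta : R := \sum_(1 <= i < L) sc ((qblk i)^T *m beta i).

Definition objective (x : 'cV[R]_(d 0)) : R :=
  sc ((avec + Pbeta)^T *m x) + qbeta + cconst.

End WithBeta.
End ReluNet.

From HB Require Import structures.
From mathcomp Require Import all_boot all_order all_algebra.
From mathcomp Require Import classical_sets reals constructive_ereal ereal.
From mathcomp Require Import ring lra.
Import Order.TTheory GRing.Theory Num.Theory.
Local Open Scope ring_scope.

(* Replacing every ReLU of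
   layer k by its relaxation z |-> D^(k) z + underline b^(k) gives an affine
   network; unrolling it with the matrices Omega shows that the objective is
   the output of this affine network plus the penalties
   sum_k beta^(k)T S^(k) z^(k) at its pre-activations. The potential
   gap k = A^(k) (hat z^(k) - relaxed hat z^(k)) - (penalties of layers <= k)
   is 0 at k = 0 and equals f(x) - objective at k = L-1. It is nondecreasing:
   its increment is A^(k+1) (ReLU z - D z - underline b) - beta^T S z for the
   true pre-activation z, and coordinatewise the first term is nonnegative
   (the relaxation lies below ReLU where A >= 0 and is the chord above it
   where A < 0), while the second is nonpositive by the split constraints. *)

Section TriangleRelaxation.
Variable R : realType.

Lemma relu_ge_scale (al z : R) : 0 <= al <= 1 -> al * z <= relu z.
Proof.
move=> /andP[al0 al1]; rewrite /relu.
by have [z0|z0] := leP 0 z; nra.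
Qed.

Lemma relu_le_chord (lo up z : R) : lo < 0 -> 0 < up -> lo <= z -> z <= up ->
  relu z <= up / (up - lo) * z - up * lo / (up - lo).
Proof.
move=> lo0 up0 hlo hup.
have ul : 0 < up - lo by lra.
have -> : up / (up - lo) * z - up * lo / (up - lo) = up * (z - lo) / (up - lo).
  by field; lra.
rewrite ler_pdivlMr // /relu.
have [z0|z0] := leP 0 z; nra.
Qed.

Lemma relu_relaxation_gap_ge0 (A z lo up al : R) (p n : bool) :
  lo <= z <= up -> (p -> 0 <= z) -> (n -> z < 0) -> 0 <= al <= 1 ->
  0 <= A * (relu z
     - (if (0 <= lo) || p then 1
        else if (up <= 0) || n then 0
        else if 0 <= A then al else up / (up - lo)) * z
     - (if [&& 0 < up, lo < 0, ~~ p & ~~ n] && (A < 0)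
        then - (up * lo) / (up - lo) else 0)).
Proof.
move=> /andP[hlo hup] hp hn hal.
have [active|] := boolP ((0 <= lo) || p).
  have z0 : 0 <= z by case/orP: active => [/le_trans->|/hp].
  have -> : [&& 0 < up, lo < 0, ~~ p & ~~ n] = false.
    by case/orP: active => [lo0|->]; rewrite ?andbF // (ltNge lo) lo0 andbF.
  by rewrite /relu max_l // mul1r subrr subr0 mulr0.
rewrite negb_or -ltNge => /andP[lo0 /negbTE ->].
have [inactive|] := boolP ((up <= 0) || n).
  have z0 : z <= 0 by case/orP: inactive => [/(le_trans hup)|/hn/ltW].
  have -> : [&& 0 < up, lo < 0, ~~ false & ~~ n] = false.
    by case/orP: inactive => [up0|->]; rewrite ?andbF // ltNge up0.
  by rewrite /relu max_r // mul0r !subr0 mulr0.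
rewrite negb_or -ltNge => /andP[up0 /negbTE ->] /=; rewrite up0 lo0 /=.
have [A0|] := boolP (0 <= A).
  by rewrite ltNge A0 subr0 mulr_ge0 // subr_ge0 relu_ge_scale.
rewrite -ltNge => A0; rewrite A0.
have := @relu_le_chord lo up z lo0 up0 hlo hup; rewrite mulNr; nra.
Qed.

Lemma mul_split_sign_le0 (be z : R) (p n : bool) :
  0 <= be -> (p -> 0 <= z) -> (n -> z < 0) ->
  be * ((if p then -1 else if n then 1 else 0) * z) <= 0.
Proof.
move=> be0 hp hn; case: p hp => [/(_ isT) z0|_].
  by rewrite mulN1r mulrN oppr_le0 mulr_ge0.
case: n hn => [/(_ isT) z0|_]; last by rewrite mul0r mulr0.
by rewrite mul1r mulr_ge0_le0 // ltW.
Qed.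

End TriangleRelaxation.

Section Scalar.
Variable R : realType.

Lemma scD (A B : 'M[R]_1) : sc (A + B) = sc A + sc B.
Proof. by rewrite /sc mxE. Qed.

Lemma sc_sum (I : Type) (r : seq I) (P : pred I) (F : I -> 'M[R]_1) :
  sc (\sum_(i <- r | P i) F i) = \sum_(i <- r | P i) sc (F i).
Proof. by rewrite /sc summxE. Qed.

Lemma scN (A : 'M[R]_1) : sc (- A) = - sc A.
Proof. by rewrite /sc mxE. Qed.

Lemma sc_tr (A : 'M[R]_1) : sc A^T = sc A.
Proof. by rewrite /sc mxE. Qed.

Lemma sc_mulmx n (A : 'rV[R]_n) (v : 'cV[R]_n) :
  sc (A *m v) = \sum_j A ord0 j * v j ord0.
Proof. by rewrite /sc mxE. Qed.

Lemma sc_row m (v : 'cV[R]_m) i : sc (row i v) = v i ord0.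
Proof. by rewrite /sc mxE. Qed.

Lemma sc_mulmx_tr n (A : 'rV[R]_n) (v : 'cV[R]_n) : sc (A *m v) = sc (v^T *m A^T).
Proof. by rewrite -trmx_mul sc_tr. Qed.

End Scalar.

Section Relaxation.
Variables (R : realType) (d : nat -> nat) (L' : nat).
Variables (W : forall i, 'M[R]_(d i, d i.-1)) (b l u alpha beta : forall i, 'cV[R]_(d i)).
Variables (Zp Zn : forall i, {set 'I_(d i)}).
Variable x : 'cV[R]_(d 0).
Local Notation L := L'.+1.
Local Notation Om := (Omega L W l u Zp Zn alpha beta).
Local Notation Dm := (Dmx L W l u Zp Zn alpha beta).
Local Notation Bl := (blmx L W l u Zp Zn alpha beta).
Local Notation Am := (Amx L W l u Zp Zn alpha beta).
Local Notation S := (Smx R Zp Zn).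

Fixpoint zhat_relax k : 'cV[R]_(d k) :=
  match k return 'cV[R]_(d k) with
  | 0 => x
  | k'.+1 => Dm k'.+1 *m (W k'.+1 *m zhat_relax k' + b k'.+1) + Bl k'.+1
  end.

Definition zpre_relax k : 'cV[R]_(d k) :=
  match k return 'cV[R]_(d k) with
  | 0 => x
  | k'.+1 => W k'.+1 *m zhat_relax k' + b k'.+1
  end.

Lemma Omega_id k : Om k k = 1%:M.
Proof. by case: k => [|k] /=; rewrite ?eqxx conform_mx_id. Qed.

Lemma OmegaS k i : i != k.+1 -> Om k.+1 i = W k.+1 *m Dm k *m Om k i.
Proof. by move=> /negbTE /= ->. Qed.

Lemma zpre_relaxE k : (1 <= k)%N -> zpre_relax k = Om k 1 *m W 1 *m x
  + \sum_(1 <= i < k.+1) Om k i *m b i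
  + \sum_(2 <= i < k.+1) Om k i *m W i *m Bl i.-1.
Proof.
elim: k => [//|[|k] IH] _.
  by rewrite big_nat1 Omega_id !mul1mx big_geq // addr0.
have -> : zpre_relax k.+2 = W k.+2 *m (Dm k.+1 *m zpre_relax k.+1 + Bl k.+1) + b k.+2 by [].
have OmegaS_lt i : (i < k.+2)%N -> Om k.+2 i = W k.+2 *m Dm k.+1 *m Om k.+1 i.
  by move=> lt_ik; rewrite OmegaS // ltn_eqF.
have sum_b : \sum_(1 <= i < k.+2) Om k.+2 i *m b i
    = W k.+2 *m Dm k.+1 *m \sum_(1 <= i < k.+2) Om k.+1 i *m b i.
  by rewrite mulmx_sumr; apply: eq_big_nat => i /andP[_ /OmegaS_lt ->]; rewrite mulmxA.
have sum_Bl : \sum_(2 <= i < k.+2) Om k.+2 i *m W i *m Bl i.-1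
    = W k.+2 *m Dm k.+1 *m \sum_(2 <= i < k.+2) Om k.+1 i *m W i *m Bl i.-1.
  by rewrite mulmx_sumr; apply: eq_big_nat => i /andP[_ /OmegaS_lt ->]; rewrite !mulmxA.
rewrite IH // (big_nat_recr k.+2) // (big_nat_recr k.+2 2) // !Omega_id !mul1mx.
rewrite sum_b sum_Bl OmegaS_lt // !mulmxDr !mulmxA /= -!addrA.
by congr (_ + (_ + _)); rewrite [b k.+2 + _]addrC -addrA.
Qed.

Lemma Smx_zpre_relax i : (1 <= i)%N ->
  S i *m zpre_relax i = Pblk L W l u Zp Zn alpha beta i *m x + qblk L W b l u Zp Zn alpha beta i.
Proof.
move=> i_ge1; rewrite zpre_relaxE // /Pblk /qblk !mulmxDr !mulmx_sumr !mulmxA addrA.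
by congr (_ + _ + _); apply: eq_bigr => k _; rewrite !mulmxA.
Qed.

Hypothesis dL1 : d L = 1%N.
Let j0 : 'I_(d L) := cast_ord (esym dL1) ord0.

Lemma conform_mx_row n (M : 'M[R]_(d L, n)) : conform_mx (0 : 'M_(1, n)) M = row j0 M.
Proof.
rewrite -(conform_castmx (dL1, erefl n)) conform_mx_id.
by apply/matrixP => i j; rewrite castmxE !mxE ord1; congr (M _ _); apply: val_inj.
Qed.

Lemma objective_relaxE : objective L W b l u Zp Zn alpha beta x
  = zpre_relax L j0 ord0 + \sum_(1 <= i < L) sc ((beta i)^T *m (S i *m zpre_relax i)).
Proof.
have entryD (A B : 'cV[R]_(d L)) : (A + B) j0 ord0 = A j0 ord0 + B j0 ord0.
  by rewrite mxE.
rewrite /objective /avec /Pbeta /qbeta /cconst !conform_mx_row zpre_relaxE //.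
rewrite sc_mulmx_tr trmxK mulmxDr scD -sc_mulmx_tr -row_mul !sc_row !entryD.
rewrite mulmx_sumr sc_sum.
have -> : \sum_(1 <= i < L) sc ((beta i)^T *m (S i *m zpre_relax i))
  = \sum_(1 <= i < L) sc (x^T *m ((Pblk L W l u Zp Zn alpha beta i)^T *m beta i))
  + \sum_(1 <= i < L) sc ((qblk L W b l u Zp Zn alpha beta i)^T *m beta i).
  rewrite -big_split; apply: eq_big_nat => i /andP[i_ge1 _].
  rewrite Smx_zpre_relax // mulmxDr scD.
  by congr (_ + _); rewrite sc_mulmx_tr ?trmx_mul trmxK ?mulmxA.
lra.
Qed.

Lemma Amx_rec k : (k < L')%N ->
  Am k = (Am k.+1 *m Dm k.+1 + (beta k.+1)^T *m S k.+1) *m W k.+1.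
Proof. by move=> lt_kL; rewrite /Amx /= -(subnSK lt_kL). Qed.

Definition gap k := sc (Am k *m (zhat W b k x - zhat_relax k))
  - \sum_(1 <= m < k.+1) sc ((beta m)^T *m (S m *m zpre_relax m)).

Lemma gap_succ k : (k < L')%N -> let z := zpre W b k.+1 x in
  gap k.+1 = gap k + sc (Am k.+1 *m (map_mx (@relu R) z - Dm k.+1 *m z - Bl k.+1))
             - sc ((beta k.+1)^T *m (S k.+1 *m z)).
Proof.
move=> lt_kL z; rewrite /gap (big_nat_recr k.+1) // (Amx_rec k lt_kL).
have lin_step : W k.+1 *m (zhat W b k x - zhat_relax k) = z - zpre_relax k.+1.
  by rewrite mulmxBr /z /= opprD addrACA subrr addr0.
have -> : zhat_relax k.+1 = Dm k.+1 *m zpre_relax k.+1 + Bl k.+1 by [].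
rewrite -mulmxA lin_step.
have -> : zhat W b k.+1 x = map_mx (@relu R) z by [].
move: (map_mx _ z) (zpre_relax k.+1) => zh zr /=; clearbody z.
by rewrite !(mulmxDr, mulmxBr, mulmxDl, mulmxN, mulmxA) !(scD, scN); lra.
Qed.

Hypothesis x_splits : in_splits L W b Zp Zn x.
Hypothesis x_bounds : forall i, (1 <= i <= L)%N -> forall j,
  l i j ord0 <= zpre W b i x j ord0 <= u i j ord0.
Hypothesis alpha01 : forall i, (1 <= i <= L')%N -> forall j, 0 <= alpha i j ord0 <= 1.
Hypothesis beta_ge0 : forall i, (1 <= i <= L')%N -> forall j, 0 <= beta i j ord0.

Lemma layer_relaxation_gap_ge0 k : (1 <= k <= L')%N ->
  0 <= sc (Am k *m (map_mx (@relu R) (zpre W b k x) - Dm k *m zpre W b k x - Bl k)).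
Proof.
move=> k_range; have [zp zn] := x_splits k k_range.
have /andP[k_ge1 k_le] := k_range.
rewrite sc_mulmx; apply: sumr_ge0 => j _.
rewrite /Dmx /Dof mul_diag_mx /blmx /blof !mxE /unstable.
apply: relu_relaxation_gap_ge0.
- by apply: x_bounds; rewrite k_ge1 leqW.
- by move/zp.
- by move/zn.
- exact: alpha01.
Qed.

Lemma split_penalty_le0 k : (1 <= k <= L')%N ->
  sc ((beta k)^T *m (S k *m zpre W b k x)) <= 0.
Proof.
move=> k_range; have [zp zn] := x_splits k k_range.
rewrite sc_mulmx; apply: sumr_le0 => j _.
rewrite /Smx mul_diag_mx !mxE.
apply: mul_split_sign_le0; [exact: beta_ge0 | exact: zp | exact: zn].
Qed.

Lemma gap_le_succ k : (k < L')%N -> gap k <= gap k.+1.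
Proof.
move=> lt_kL; rewrite gap_succ //.
have := layer_relaxation_gap_ge0 k.+1 lt_kL.
have := split_penalty_le0 k.+1 lt_kL.
lra.
Qed.

Lemma gap_ge0 k : (k <= L')%N -> 0 <= gap k.
Proof.
elim: k => [_|k IH lt_kL]; last exact: le_trans (IH (ltnW lt_kL)) (gap_le_succ k lt_kL).
by rewrite /gap big_geq // subrr mulmx0 /sc mxE subr0.
Qed.

Lemma gap_top : gap L' = fnet L W b x - objective L W b l u Zp Zn alpha beta x.
Proof.
rewrite objective_relaxE /gap /fnet /Amx subnn /= !conform_mx_row.
by rewrite -row_mul !sc_row mulmxBr !mxE; lra.
Qed.

Lemma objective_le_fnet : objective L W b l u Zp Zn alpha beta x <= fnet L W b x.
Proof. by rewrite -subr_ge0 -gap_top gap_ge0. Qed.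

End Relaxation.

Theorem theorem1 (R : realType) (d : nat -> nat) (L : nat)
  (W : forall i, 'M[R]_(d i, d i.-1)) (b : forall i, 'cV[R]_(d i))
  (C : set 'cV[R]_(d 0))
  (Zp Zn : forall i, {set 'I_(d i)})
  (l u : forall i, 'cV[R]_(d i))
  (alpha : forall i, 'cV[R]_(d i)) :
  (1 <= L)%N ->
  d L = 1%N ->
  (forall i, (1 <= i <= L.-1)%N -> [disjoint Zp i & Zn i]) ->
  (forall x, C x -> in_splits L W b Zp Zn x ->
     forall i, (1 <= i <= L)%N -> forall j,
       l i j ord0 <= zpre W b i x j ord0 <= u i j ord0) ->
  (forall i, (1 <= i <= L.-1)%N -> forall j, 0 <= alpha i j ord0 <= 1) ->
  (ereal_sup [set ereal_inf [set (objective L W b l u Zp Zn alpha beta x)%:E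
                             | x in C]%classic
             | beta in [set beta : forall i, 'cV[R]_(d i) |
                         forall i, (1 <= i <= L.-1)%N ->
                           forall j, (0 <= beta i j ord0)%R]%classic]%classic
   <= ereal_inf [set (fnet L W b x)%:E
                 | x in [set x | C x /\ in_splits L W b Zp Zn x]%classic]%classic)%E.
Proof.
case: L => [//|L'] _ dL1 _ x_bounds alpha01.
apply: ge_ereal_sup => _ [beta beta_ge0 <-].
apply/ereal_infP => _ [x [Cx x_splits] <-].
apply: ge_ereal_inf; exists (objective L'.+1 W b l u Zp Zn alpha beta x)%:E; first by exists x.
by rewrite lee_fin objective_le_fnet //; exact: x_bounds.
Qed.
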